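(* The group $G_{sm}=H_9\times S_{sm}$ has exactly three orbits on the set of semi-magic Sudoku boards.
   Context: A Sudoku board is a $9\times 9$ array with entries from $\{0,\dots,8\}$ such that every row, every column and every one of the nine $3\times 3$ blocks contains each symbol exactly once. A semi-magic Sudoku board is a Sudoku board in which, in every block, each of the three rows and each of the three columns of the block has entry sum $12$. $H_9$ is the group of cell rearrangements (acting on boards by moving entries) generated by permutations of the three bands (horizontal strips of blocks), permutations of the rows within a band, permutations of the three pillars (vertical strips of blocks), permutations of the columns within a pillar, and the transpose. A relabeling is a permutation of the symbols $\{0,\dots,8\}$ applied to every entry; $S_{sm}$ is the group of relabelings that map every semi-magic Sudoku board to a semi-magic Sudoku board (it has order $72$). *)

From mathcomp Require Import all_boot all_order all_fingroup.
Set Implicit Arguments. Unset Strict Implicit. Unset Printing Implicit Defensive.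

Local Open Scope nat_scope.

(* A row index of the 9x9 array is encoded as a pair (band, row-in-band)
   : 'I_3 * 'I_3, standing for row 3*band + row-in-band; likewise a column
   index is (pillar, column-in-pillar). *)
Definition idx := ('I_3 * 'I_3)%type.
Definition cell := (idx * idx)%type.

Definition board := {ffun cell -> 'I_9}.

Definition sudoku (B : board) : bool :=
  [forall R : idx, forall s : 'I_9, #|[set C : idx | B (R, C) == s]| == 1]
  && [forall C : idx, forall s : 'I_9, #|[set R : idx | B (R, C) == s]| == 1]
  && [forall b : 'I_3, forall p : 'I_3, forall s : 'I_9,
        #|[set rc : 'I_3 * 'I_3 | B ((b, rc.1), (p, rc.2)) == s]| == 1].

Definition semimagic (B : board) : bool :=
  sudoku B
  && [forall b : 'I_3, forall p : 'I_3, forall r : 'I_3,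
        \sum_(c < 3) nat_of_ord (B ((b, r), (p, c))) == 12]
  && [forall b : 'I_3, forall p : 'I_3, forall c : 'I_3,
        \sum_(r < 3) nat_of_ord (B ((b, r), (p, c))) == 12].

Definition band_fun (sg : {perm 'I_3}) (x : idx) : idx := (sg x.1, x.2).
Lemma band_fun_inj sg : injective (band_fun sg).
Proof. by move=> [a b] [c d] [/perm_inj -> ->]. Qed.

Definition inband_fun (b : 'I_3) (tau : {perm 'I_3}) (x : idx) : idx :=
  (x.1, if x.1 == b then tau x.2 else x.2).
Lemma inband_fun_inj b tau : injective (inband_fun b tau).
Proof.
move=> [a c] [a' c'] [/= ea]; subst a'.
case: (a == b) => [/perm_inj -> // | -> //].
Qed.

Definition rows_fun (f : idx -> idx) (x : cell) : cell := (f x.1, x.2).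
Definition cols_fun (f : idx -> idx) (x : cell) : cell := (x.1, f x.2).
Lemma rows_fun_inj f : injective f -> injective (rows_fun f).
Proof. by move=> fi [a b] [c d] [/fi -> ->]. Qed.
Lemma cols_fun_inj f : injective f -> injective (cols_fun f).
Proof. by move=> fi [a b] [c d] [-> /fi ->]. Qed.

Definition transp_fun (x : cell) : cell := (x.2, x.1).
Lemma transp_fun_inj : injective transp_fun.
Proof. by move=> [a b] [c d] [-> ->]. Qed.

Definition band_perm sg : {perm cell} :=
  perm (@rows_fun_inj _ (@band_fun_inj sg)).
Definition rowin_perm b tau : {perm cell} :=
  perm (@rows_fun_inj _ (@inband_fun_inj b tau)).
Definition pillar_perm sg : {perm cell} :=
  perm (@cols_fun_inj _ (@band_fun_inj sg)).
Definition colin_perm b tau : {perm cell} :=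
  perm (@cols_fun_inj _ (@inband_fun_inj b tau)).
Definition transpose_perm : {perm cell} := perm transp_fun_inj.

Definition H9_gens : {set {perm cell}} :=
  [set band_perm sg | sg : {perm 'I_3}]
  :|: [set rowin_perm bt.1 bt.2 | bt : 'I_3 * {perm 'I_3}]
  :|: [set pillar_perm sg | sg : {perm 'I_3}]
  :|: [set colin_perm bt.1 bt.2 | bt : 'I_3 * {perm 'I_3}]
  :|: [set transpose_perm].

Definition H9 : {group {perm cell}} := <<H9_gens>>%G.

Definition rearrange (g : {perm cell}) (B : board) : board :=
  [ffun x => B ((g^-1)%g x)].

Definition relabel (s : {perm 'I_9}) (B : board) : board :=
  [ffun x => s (B x)].

Definition S_sm : {set {perm 'I_9}} :=
  [set s : {perm 'I_9} | [forall B : board, semimagic B ==> semimagic (relabel s B)]].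

(* Orbit of B under G_sm = H_9 x S_sm acting by (h, s).B = s o B o h^-1. *)
Definition Gsm_orbit (B : board) : {set board} :=
  [set B' : board | [exists h in H9, exists s in S_sm,
                       B' == relabel s (rearrange h B)]].

Definition semimagic_boards : {set board} := [set B : board | semimagic B].

From mathcomp Require Import all_boot all_order all_fingroup.
Set Implicit Arguments. Unset Strict Implicit. Unset Printing Implicit Defensive.
Local Open Scope nat_scope.

(* Every block of a semi-magic board is one of 72 magic blocks: up to
   transposition, the array (i, j) |-> 3 ((i + 2 j) mod 3) + (2 i + 2 j) mod 3
   with its rows and its columns permuted.  The blocks of a band share their
   orientation and their row permutations form a Latin square, and likewise for
   pillars; so permuting the rows inside each band and the columns inside each
   pillar brings every board to one of 2^7 normal forms.  A search through band
   and pillar permutations, the transposition and the relabeling exchanging the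
   symbols 3, 4, 5 with 6, 7, 8 links each normal form to one of three
   representatives.  These lie in distinct orbits: the number of directions in
   which any two bands (resp. pillars) carry the same symbol triples, pillar by
   pillar (resp. band by band), is invariant under G_sm and takes the values
   2, 1 and 0 on them. *)

Lemma rearrangeE g B x : rearrange g B x = B ((g^-1)%g x).
Proof. by rewrite ffunE. Qed.

Lemma relabelE s B x : relabel s B x = s (B x).
Proof. by rewrite ffunE. Qed.

Lemma rearrange1 B : rearrange 1%g B = B.
Proof. by apply/ffunP=> x; rewrite !ffunE invg1 perm1. Qed.

Lemma rearrangeM g h B : rearrange (g * h)%g B = rearrange h (rearrange g B).
Proof. by apply/ffunP=> x; rewrite !ffunE invMg permM. Qed.

Lemma relabel1 B : relabel 1%g B = B.
Proof. by apply/ffunP=> x; rewrite !ffunE perm1. Qed.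

Lemma relabelM s t B : relabel (s * t)%g B = relabel t (relabel s B).
Proof. by apply/ffunP=> x; rewrite !ffunE permM. Qed.

Lemma relabel_rearrange s g B :
  relabel s (rearrange g B) = rearrange g (relabel s B).
Proof. by apply/ffunP=> x; rewrite !ffunE. Qed.

Lemma S_smP s :
  reflect (forall B, semimagic B -> semimagic (relabel s B)) (s \in S_sm).
Proof.
rewrite inE; apply: (iffP forallP) => sP B; first by move/(implyP (sP B)).
exact/implyP/sP.
Qed.

Lemma group_set_S_sm : group_set S_sm.
Proof.
apply/group_setP; split=> [|s t]; first by apply/S_smP => B; rewrite relabel1.
by move=> /S_smP sP /S_smP tP; apply/S_smP => B /sP/tP; rewrite relabelM.
Qed.
Canonical S_sm_group := Group group_set_S_sm.

Lemma Gsm_orbitP B B' :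
  reflect (exists2 h, h \in H9 & exists2 s, s \in S_sm &
             B' = relabel s (rearrange h B))
          (B' \in Gsm_orbit B).
Proof.
rewrite inE; apply: (iffP exists_inP) => [[h hH /exists_inP [s sS /eqP ->]]|].
  by exists h => //; exists s.
by move=> [h hH [s sS ->]]; exists h => //; apply/exists_inP; exists s.
Qed.

Lemma Gsm_orbit_refl B : B \in Gsm_orbit B.
Proof.
by apply/Gsm_orbitP; exists 1%g => //; exists 1%g => //; rewrite rearrange1 relabel1.
Qed.

Lemma Gsm_orbit_rearrange g B : g \in H9 -> Gsm_orbit (rearrange g B) = Gsm_orbit B.
Proof.
move=> gH; apply/setP => B'; apply/Gsm_orbitP/Gsm_orbitP => -[h hH [s sS ->]].
  by exists (g * h)%g; rewrite ?groupM //; exists s; rewrite ?rearrangeM.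
exists (g^-1 * h)%g; rewrite ?groupM ?groupV //; exists s => //.
by rewrite -rearrangeM mulgA mulgV mul1g.
Qed.

Lemma Gsm_orbit_relabel t B : t \in S_sm -> Gsm_orbit (relabel t B) = Gsm_orbit B.
Proof.
move=> tS; apply/setP => B'; apply/Gsm_orbitP/Gsm_orbitP => -[h hH [s sS ->]].
  by exists h => //; exists (t * s)%g; rewrite ?groupM // relabelM -relabel_rearrange.
exists h => //; exists (t^-1 * s)%g; rewrite ?groupM ?groupV //.
by rewrite relabelM -relabel_rearrange -[relabel t^-1 _]relabelM mulgV relabel1.
Qed.

Lemma perm_invE (T : finType) (f g : T -> T) (f_inj : injective f) :
  cancel g f -> ((perm f_inj)^-1)%g =1 g.
Proof. by move=> gK x; apply: (@perm_inj _ (perm f_inj)); rewrite permKV permE gK. Qed.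

Lemma band_permV sg x :
  ((band_perm sg)^-1)%g x = (((sg^-1)%g x.1.1, x.1.2), x.2).
Proof.
apply: (perm_invE (g := rows_fun (band_fun (sg^-1)%g))) => -[[a r] y].
by rewrite /rows_fun /band_fun /= permKV.
Qed.

Lemma pillar_permV sg x :
  ((pillar_perm sg)^-1)%g x = (x.1, ((sg^-1)%g x.2.1, x.2.2)).
Proof.
apply: (perm_invE (g := cols_fun (band_fun (sg^-1)%g))) => -[y [a c]].
by rewrite /cols_fun /band_fun /= permKV.
Qed.

Lemma rowin_permV b tau x : ((rowin_perm b tau)^-1)%g x =
  ((x.1.1, if x.1.1 == b then (tau^-1)%g x.1.2 else x.1.2), x.2).
Proof.
apply: (perm_invE (g := rows_fun (inband_fun b (tau^-1)%g))) => -[[a r] y].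
by rewrite /rows_fun /inband_fun /=; case: (a == b); rewrite ?permKV.
Qed.

Lemma colin_permV p tau x : ((colin_perm p tau)^-1)%g x =
  (x.1, (x.2.1, if x.2.1 == p then (tau^-1)%g x.2.2 else x.2.2)).
Proof.
apply: (perm_invE (g := cols_fun (inband_fun p (tau^-1)%g))) => -[y [a c]].
by rewrite /cols_fun /inband_fun /=; case: (a == p); rewrite ?permKV.
Qed.

Lemma transpose_permV x : (transpose_perm^-1)%g x = (x.2, x.1).
Proof. by apply: (perm_invE (g := transp_fun)) => -[]. Qed.

(** * An invariant *)

Definition row_symbols (B : board) (b p r : 'I_3) : {set 'I_9} :=
  [set B ((b, r), (p, c)) | c : 'I_3].

Definition bands_matched (B : board) (b b' : 'I_3) : bool :=
  [forall r', exists r, forall p, row_symbols B b' p r' == row_symbols B b p r].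

Definition rows_matched (B : board) : bool := [forall b, forall b', bands_matched B b b'].

Definition transpose_board (B : board) : board := rearrange transpose_perm B.

Definition matching_number (B : board) : nat :=
  rows_matched B + rows_matched (transpose_board B).

Lemma rows_matched_relabel s B : rows_matched (relabel s B) = rows_matched B.
Proof.
have symbolsE b p r : row_symbols (relabel s B) b p r = s @: row_symbols B b p r.
  by rewrite -imset_comp; apply: eq_imset => c; rewrite /= relabelE.
apply: eq_forallb => b; apply: eq_forallb => b'; apply: eq_forallb => r'.
apply: eq_existsb => r; apply: eq_forallb => p.
by rewrite !symbolsE (inj_eq (imset_inj (@perm_inj _ s))).
Qed.

Lemma rows_matched_reindex B B' (f : {perm 'I_3}) :
  (forall b b', bands_matched B' b b' = bands_matched B (f b) (f b')) ->
  rows_matched B' = rows_matched B.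
Proof.
move=> BB'; apply/forallP/forallP => mB b; apply/forallP => b'.
  by have /forallP := mB ((f^-1)%g b); move/(_ ((f^-1)%g b')); rewrite BB' !permKV.
by rewrite BB'; apply: (forallP (mB (f b))).
Qed.

Lemma bands_matched_reindex B B' b b' c c' (g h k : {perm 'I_3}) :
  (forall p r' r, (row_symbols B' b' p r' == row_symbols B' b p r) =
                  (row_symbols B c' (k p) (g r') == row_symbols B c (k p) (h r))) ->
  bands_matched B' b b' = bands_matched B c c'.
Proof.
move=> BB'; apply/forallP/forallP => mB r'.
  have /existsP [r /forallP rP] := mB ((g^-1)%g r').
  apply/existsP; exists (h r); apply/forallP => p.
  by have := rP ((k^-1)%g p); rewrite BB' !permKV.
have /existsP [r /forallP rP] := mB (g r').
by apply/existsP; exists ((h^-1)%g r); apply/forallP => p; rewrite BB' permKV; apply: rP.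
Qed.

Lemma rows_matched_band sg B : rows_matched (rearrange (band_perm sg) B) = rows_matched B.
Proof.
have symbolsE b p r :
    row_symbols (rearrange (band_perm sg) B) b p r = row_symbols B ((sg^-1)%g b) p r.
  by apply: eq_imset => c; rewrite rearrangeE band_permV.
apply: (rows_matched_reindex (f := (sg^-1)%g)) => b b'.
by apply: (bands_matched_reindex (g := 1%g) (h := 1%g) (k := 1%g)) => p r' r;
  rewrite !symbolsE !perm1.
Qed.

Lemma rows_matched_pillar sg B : rows_matched (rearrange (pillar_perm sg) B) = rows_matched B.
Proof.
have symbolsE b p r :
    row_symbols (rearrange (pillar_perm sg) B) b p r = row_symbols B b ((sg^-1)%g p) r.
  by apply: eq_imset => c; rewrite rearrangeE pillar_permV.
apply: (rows_matched_reindex (f := 1%g)) => b b'; rewrite !perm1.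
by apply: (bands_matched_reindex (g := 1%g) (h := 1%g) (k := (sg^-1)%g)) => p r' r;
  rewrite !symbolsE !perm1.
Qed.

Lemma rows_matched_rowin b0 tau B :
  rows_matched (rearrange (rowin_perm b0 tau) B) = rows_matched B.
Proof.
pose tau_at (b : 'I_3) : {perm 'I_3} := if b == b0 then (tau^-1)%g else 1%g.
have symbolsE b p r :
    row_symbols (rearrange (rowin_perm b0 tau) B) b p r = row_symbols B b p (tau_at b r).
  by apply: eq_imset => c; rewrite rearrangeE rowin_permV /tau_at; case: (b == b0); rewrite ?perm1.
apply: (rows_matched_reindex (f := 1%g)) => b b'; rewrite !perm1.
by apply: (bands_matched_reindex (g := tau_at b') (h := tau_at b) (k := 1%g)) => p r' r;
  rewrite !symbolsE perm1.
Qed.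

Lemma rows_matched_colin p0 tau B :
  rows_matched (rearrange (colin_perm p0 tau) B) = rows_matched B.
Proof.
have symbolsE b p r : row_symbols (rearrange (colin_perm p0 tau) B) b p r = row_symbols B b p r.
  apply/setP => y; apply/imsetP/imsetP => -[c _ ->].
    rewrite rearrangeE colin_permV /=.
    by case: (p == p0); [exists ((tau^-1)%g c) | exists c].
  case: (eqVneq p p0) => [->|pp0].
    by exists (tau c) => //; rewrite rearrangeE colin_permV /= eqxx permK.
  by exists c => //; rewrite rearrangeE colin_permV /= (negbTE pp0).
apply: (rows_matched_reindex (f := 1%g)) => b b'; rewrite !perm1.
by apply: (bands_matched_reindex (g := 1%g) (h := 1%g) (k := 1%g)) => p r' r;
  rewrite !symbolsE !perm1.
Qed.

Lemma transpose_boardK : involutive transpose_board.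
Proof. by move=> B; apply/ffunP => -[y z]; rewrite !rearrangeE !transpose_permV. Qed.

Lemma transpose_board_band sg B : transpose_board (rearrange (band_perm sg) B) =
  rearrange (pillar_perm sg) (transpose_board B).
Proof.
by apply/ffunP => x; rewrite !rearrangeE transpose_permV band_permV pillar_permV transpose_permV.
Qed.

Lemma transpose_board_pillar sg B : transpose_board (rearrange (pillar_perm sg) B) =
  rearrange (band_perm sg) (transpose_board B).
Proof.
by apply/ffunP => x; rewrite !rearrangeE transpose_permV band_permV pillar_permV transpose_permV.
Qed.

Lemma transpose_board_rowin b tau B : transpose_board (rearrange (rowin_perm b tau) B) =
  rearrange (colin_perm b tau) (transpose_board B).
Proof.
by apply/ffunP => x; rewrite !rearrangeE transpose_permV rowin_permV colin_permV transpose_permV.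
Qed.

Lemma transpose_board_colin b tau B : transpose_board (rearrange (colin_perm b tau) B) =
  rearrange (rowin_perm b tau) (transpose_board B).
Proof.
by apply/ffunP => x; rewrite !rearrangeE transpose_permV rowin_permV colin_permV transpose_permV.
Qed.

Lemma matching_number_transpose B : matching_number (transpose_board B) = matching_number B.
Proof. by rewrite /matching_number transpose_boardK; apply: addnC. Qed.

Definition matching_stabilizer : {set {perm cell}} :=
  [set g | [forall B, matching_number (rearrange g B) == matching_number B]].

Lemma group_set_matching_stabilizer : group_set matching_stabilizer.
Proof.
apply/group_setP; split=> [|g h]; first by rewrite inE; apply/forallP => B; rewrite rearrange1.
rewrite !inE => /forallP gP /forallP hP; apply/forallP => B.
by rewrite rearrangeM (eqP (hP _)) (eqP (gP _)).
Qed.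
Canonical matching_stabilizer_group := Group group_set_matching_stabilizer.

Lemma H9_sub_matching_stabilizer : H9 \subset matching_stabilizer.
Proof.
rewrite gen_subG; apply/subsetP => g; rewrite !inE.
case/orP => [/orP [/orP [/orP [/imsetP [sg _ ->]|/imsetP [[b tau] _ ->]]|
             /imsetP [sg _ ->]]|/imsetP [[b tau] _ ->]]|/eqP ->];
  apply/forallP => B; apply/eqP; last exact: matching_number_transpose.
all: rewrite /matching_number.
- by rewrite rows_matched_band transpose_board_band rows_matched_pillar.
- by rewrite rows_matched_rowin transpose_board_rowin rows_matched_colin.
- by rewrite rows_matched_pillar transpose_board_pillar rows_matched_band.
- by rewrite rows_matched_colin transpose_board_colin rows_matched_rowin.
Qed.

Lemma matching_number_relabel s B : matching_number (relabel s B) = matching_number B.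
Proof.
by rewrite /matching_number /transpose_board -relabel_rearrange !rows_matched_relabel.
Qed.

Lemma matching_number_orbit B B' : B' \in Gsm_orbit B -> matching_number B' = matching_number B.
Proof.
case/Gsm_orbitP => h /(subsetP H9_sub_matching_stabilizer) + [s _ ->].
by rewrite inE matching_number_relabel => /forallP/(_ B)/eqP.
Qed.

(** * Permutations of three points and magic blocks *)

Definition i0 : 'I_3 := Ordinal (isT : 0 < 3).
Definition i1 : 'I_3 := Ordinal (isT : 1 < 3).
Definition i2 : 'I_3 := Ordinal (isT : 2 < 3).
Definition ords3 : seq 'I_3 := [:: i0; i1; i2].

Lemma ord3_ind (P : 'I_3 -> Prop) : P i0 -> P i1 -> P i2 -> forall i, P i.
Proof.
move=> P0 P1 P2 [[|[|[|n]]] lt_n3] //.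
- by rewrite (_ : Ordinal _ = i0) //; apply: val_inj.
- by rewrite (_ : Ordinal _ = i1) //; apply: val_inj.
- by rewrite (_ : Ordinal _ = i2) //; apply: val_inj.
Qed.

Lemma mem_ords3 i : i \in ords3.
Proof. by elim/ord3_ind: i. Qed.

Lemma all_ords3 (P : pred 'I_3) : all P ords3 -> forall i, P i.
Proof. by move=> /allP PP i; apply/PP/mem_ords3. Qed.

Definition pairs3 : seq ('I_3 * 'I_3) := [seq (i, j) | i <- ords3, j <- ords3].

Lemma mem_pairs3 ij : ij \in pairs3.
Proof. by case: ij => i j; apply: allpairs_f; apply: mem_ords3. Qed.

Definition cells : seq cell := [seq (R, C) | R <- pairs3, C <- pairs3].

Lemma mem_cells x : x \in cells.
Proof. by case: x => R C; apply: allpairs_f; apply: mem_pairs3. Qed.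

(* Codes are read modulo 6, so that every natural number codes a permutation. *)
Definition perm3_table : seq (seq nat) :=
  [:: [:: 0; 1; 2]; [:: 1; 2; 0]; [:: 2; 0; 1]; [:: 0; 2; 1]; [:: 2; 1; 0]; [:: 1; 0; 2]].
Definition perm3 (k i : nat) : nat := nth 0 (nth [::] perm3_table (k %% 6)) i.
Definition perm3_inv (k : nat) : nat := nth 0 [:: 0; 2; 1; 3; 4; 5] (k %% 6).

Definition perm3_check : bool :=
  all (fun k => all (fun i : 'I_3 =>
    [&& perm3 k i < 3, perm3 k (perm3 (perm3_inv k) i) == i &
        perm3 (perm3_inv k) (perm3 k i) == i]) ords3) (iota 0 6).
Lemma perm3_check_ok : perm3_check. Proof. by vm_compute. Qed.

Lemma perm3_facts k (i : 'I_3) : [&& perm3 k i < 3, perm3 k (perm3 (perm3_inv k) i) == i &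
                                    perm3 (perm3_inv k) (perm3 k i) == i].
Proof.
have k6 : k %% 6 \in iota 0 6 by rewrite mem_iota ltn_mod.
have := all_ords3 (allP perm3_check_ok _ k6) i.
by rewrite /perm3 /perm3_inv !modn_mod.
Qed.

Lemma perm3_lt k (i : 'I_3) : perm3 k i < 3.
Proof. by case/and3P: (perm3_facts k i). Qed.

Lemma perm3_invK k (i : 'I_3) : perm3 k (perm3 (perm3_inv k) i) = i.
Proof. by case/and3P: (perm3_facts k i) => _ /eqP. Qed.

Lemma perm3K k (i : 'I_3) : perm3 (perm3_inv k) (perm3 k i) = i.
Proof. by case/and3P: (perm3_facts k i) => _ _ /eqP. Qed.

Definition ord_perm3 (k : nat) (i : 'I_3) : 'I_3 := Ordinal (perm3_lt k i).

Lemma ord_perm3E k i : val (ord_perm3 k i) = perm3 k i.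
Proof. by []. Qed.

Lemma ord_perm3_inj k : injective (ord_perm3 k).
Proof.
move=> i j /(congr1 val) /= eq_ij.
by apply: val_inj; rewrite /= -(perm3K k i) eq_ij perm3K.
Qed.

Definition code_perm (k : nat) : {perm 'I_3} := perm (@ord_perm3_inj k).

Lemma code_permV k i : ((code_perm k)^-1)%g i = ord_perm3 (perm3_inv k) i.
Proof.
apply: (@perm_inj _ (code_perm k)); rewrite permKV permE; apply: val_inj.
by rewrite /= perm3_invK.
Qed.

Definition base_symbol (i j : nat) : nat := 3 * ((i + 2 * j) %% 3) + (2 * i + 2 * j) %% 3.
Definition block_entry (e : bool) (i j : nat) : nat :=
  if e then base_symbol j i else base_symbol i j.

Lemma block_entry_lt e i j : block_entry e i j < 9.
Proof.
suff base_lt u v : base_symbol u v < 9 by case: e; apply: base_lt.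
rewrite /base_symbol; have := ltn_pmod (u + 2 * v) (isT : 0 < 3).
have := ltn_pmod (2 * u + 2 * v) (isT : 0 < 3).
by case: ((u + 2 * v) %% 3) => [|[|[|]]] //; case: ((2 * u + 2 * v) %% 3) => [|[|[|]]].
Qed.

Definition block_param := (bool * nat * nat)%type.
Definition param_entry (par : block_param) (r c : nat) : nat :=
  let: (e, k1, k2) := par in block_entry e (perm3 k1 r) (perm3 k2 c).
Definition block_params : seq block_param :=
  flatten [seq [seq (e, k1, k2) | k1 <- iota 0 6, k2 <- iota 0 6] | e <- [:: false; true]].
Definition param_block (par : block_param) : seq nat :=
  [seq param_entry par rc.1 rc.2 | rc : 'I_3 * 'I_3 <- pairs3].
Definition magic_blocks : seq (seq nat) := map param_block block_params.

Definition magic_line (a b c : nat) : bool := uniq [:: a; b; c] && (a + b + c == 12).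
Definition symbols : seq nat := iota 0 9.

(* The nested [if]s prune the search; an implication [==>] would not, since
   vm_compute evaluates both of its arguments. *)
Definition magic_block_search : bool :=
  all (fun x0 => all (fun x1 => all (fun x2 =>
  if magic_line x0 x1 x2 then
    all (fun x3 => all (fun x4 => all (fun x5 =>
    if magic_line x3 x4 x5 && uniq [:: x0; x1; x2; x3; x4; x5] then
      all (fun x6 => all (fun x7 => all (fun x8 =>
      let q := [:: x0; x1; x2; x3; x4; x5; x6; x7; x8] in
      if [&& uniq q, x6 + x7 + x8 == 12, x0 + x3 + x6 == 12,
             x1 + x4 + x7 == 12 & x2 + x5 + x8 == 12]
      then q \in magic_blocks else true) symbols) symbols) symbols
    else true) symbols) symbols) symbols
  else true) symbols) symbols) symbols.
Lemma magic_block_search_ok : magic_block_search. Proof. by vm_compute. Qed.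

Lemma magic_block_complete (f : 'I_3 -> 'I_3 -> nat) :
  (forall r c, f r c < 9) -> injective (fun rc : 'I_3 * 'I_3 => f rc.1 rc.2) ->
  (forall r, f r i0 + f r i1 + f r i2 = 12) -> (forall c, f i0 c + f i1 c + f i2 c = 12) ->
  [seq f rc.1 rc.2 | rc : 'I_3 * 'I_3 <- pairs3] \in magic_blocks.
Proof.
move=> f_lt f_inj rows cols.
have uniq_of (s : seq ('I_3 * 'I_3)) : uniq s -> uniq [seq f rc.1 rc.2 | rc <- s].
  by move=> us; rewrite map_inj_uniq.
have u012 : uniq [:: f i0 i0; f i0 i1; f i0 i2] := uniq_of [:: (i0, i0); (i0, i1); (i0, i2)] isT.
have u345 : uniq [:: f i1 i0; f i1 i1; f i1 i2] := uniq_of [:: (i1, i0); (i1, i1); (i1, i2)] isT.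
have u05 : uniq [:: f i0 i0; f i0 i1; f i0 i2; f i1 i0; f i1 i1; f i1 i2] :=
  uniq_of [:: (i0, i0); (i0, i1); (i0, i2); (i1, i0); (i1, i1); (i1, i2)] isT.
have uq := uniq_of pairs3 isT.
have row r : f r i0 + f r i1 + f r i2 == 12 by rewrite rows.
have col c : f i0 c + f i1 c + f i2 c == 12 by rewrite cols.
have inS r c : f r c \in symbols by rewrite mem_iota f_lt.
move: magic_block_search_ok; rewrite /magic_block_search.
move=> /allP /(_ _ (inS i0 i0)) /allP /(_ _ (inS i0 i1)) /allP /(_ _ (inS i0 i2)).
rewrite {1}/magic_line u012 row => /allP /(_ _ (inS i1 i0)) /allP /(_ _ (inS i1 i1)).
move=> /allP /(_ _ (inS i1 i2)); rewrite {1}/magic_line u345 row u05.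
move=> /allP /(_ _ (inS i2 i0)) /allP /(_ _ (inS i2 i1)) /allP /(_ _ (inS i2 i2)).
by rewrite uq row !col.
Qed.


Definition decode (q : seq nat) : block_param :=
  nth (false, 0, 0) block_params (index q magic_blocks).

Lemma decodeK q : q \in magic_blocks -> param_block (decode q) = q.
Proof.
move=> qM; have lt_q : index q magic_blocks < size block_params.
  by rewrite -(size_map param_block) index_mem.
by rewrite /decode -(nth_map _ (param_block (false, 0, 0))) // nth_index.
Qed.

Lemma decode_mem q : q \in magic_blocks -> decode q \in block_params.
Proof.
move=> qM; apply: mem_nth.
by rewrite -(size_map param_block) index_mem.
Qed.

Lemma param_codes_lt par : par \in block_params -> (par.1.2 < 6) && (par.2 < 6).
Proof. by apply/allP: par; vm_compute. Qed.

Definition param_lines_check : bool :=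
  all (fun par => all (fun r : 'I_3 =>
        (param_entry par r i0 + param_entry par r i1 + param_entry par r i2 == 12) &&
        (param_entry par i0 r + param_entry par i1 r + param_entry par i2 r == 12)) ords3)
    block_params.
Lemma param_lines_check_ok : param_lines_check. Proof. by vm_compute. Qed.

Definition neighbours_check (entry : block_param -> 'I_3 -> 'I_3 -> nat)
    (code : block_param -> nat) : bool :=
  all (fun par => all (fun par' =>
    all (fun r => all (fun c => all (fun c' => entry par r c != entry par' r c') ords3) ords3) ords3
    ==> (par.1.1 == par'.1.1) &&
        all (fun r : 'I_3 => perm3 (code par) r != perm3 (code par') r) ords3)
  block_params) block_params.

Lemma neighboursP entry code par par' :
  neighbours_check entry code -> par \in block_params -> par' \in block_params ->
  (forall r c c', entry par r c != entry par' r c') ->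
  par.1.1 = par'.1.1 /\ forall r : 'I_3, perm3 (code par) r != perm3 (code par') r.
Proof.
move=> /allP check parP par'P disj.
have /implyP := allP (check _ parP) _ par'P.
case/(_ _)/andP => [|/eqP -> codesP]; last by split=> // r; apply: (all_ords3 codesP).
by apply/allP => r _; apply/allP => c _; apply/allP => c' _; apply: disj.
Qed.

Lemma band_neighbours_check_ok :
  neighbours_check (fun par r c => param_entry par r c) (fun par => par.1.2).
Proof. by vm_compute. Qed.

Lemma pillar_neighbours_check_ok :
  neighbours_check (fun par c r => param_entry par r c) (fun par => par.2).
Proof. by vm_compute. Qed.

(* Three pointwise distinct permutations of {0, 1, 2}, composed with the
   inverse of the first one, are the shifts by 0, 1, 2 or by 0, 2, 1;
   latin_twist tells which. *)
Definition shift (twice : bool) (p r : nat) : nat := (r + (1 + twice) * p) %% 3.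

Definition latin_twist (f : 'I_3 -> nat) : bool :=
  perm3 (f i1) (perm3 (perm3_inv (f i0)) 0) == 2.

Definition latin_check : bool :=
  all (fun k0 => all (fun k1 => all (fun k2 =>
    let f := nth k0 [:: k0; k1; k2] in
    all (fun r : 'I_3 => uniq [:: perm3 k0 r; perm3 k1 r; perm3 k2 r]) ords3 ==>
    all (fun p : 'I_3 => all (fun r : 'I_3 =>
      perm3 (f p) (perm3 (perm3_inv k0) r) == shift (perm3 k1 (perm3 (perm3_inv k0) 0) == 2) p r)
      ords3) ords3)
  (iota 0 6)) (iota 0 6)) (iota 0 6).
Lemma latin_check_ok : latin_check. Proof. by vm_compute. Qed.

Lemma latin_shift (f : 'I_3 -> nat) : (forall p, f p < 6) ->
  (forall p p', p != p' -> forall r : 'I_3, perm3 (f p) r != perm3 (f p') r) ->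
  forall p r : 'I_3, perm3 (f p) (perm3 (perm3_inv (f i0)) r) = shift (latin_twist f) p r.
Proof.
move=> f_lt f_distinct p r.
have f6 q : f q \in iota 0 6 by rewrite mem_iota leq0n add0n f_lt.
have latin := allP (allP (allP latin_check_ok _ (f6 i0)) _ (f6 i1)) _ (f6 i2).
have distinct3 :
    all (fun r : 'I_3 => uniq [:: perm3 (f i0) r; perm3 (f i1) r; perm3 (f i2) r]) ords3.
  by apply/allP => r' _; rewrite /= !inE !negb_or !f_distinct.
have /allP shiftP := implyP latin distinct3.
have fE : nth (f i0) [:: f i0; f i1; f i2] p = f p by elim/ord3_ind: p.
by have /allP /(_ r (mem_ords3 r)) /eqP := shiftP p (mem_ords3 p); rewrite fE.
Qed.

Definition raw_board := cell -> nat.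
Definition raw (B : board) : raw_board := fun x => val (B x).
Lemma rawE B x : raw B x = val (B x). Proof. by []. Qed.

Definition block (R : raw_board) (b p : 'I_3) : seq nat :=
  [seq R ((b, rc.1), (p, rc.2)) | rc : 'I_3 * 'I_3 <- pairs3].

Lemma block_entries R b p : block R b p \in magic_blocks ->
  forall r c, R ((b, r), (p, c)) = param_entry (decode (block R b p)) r c.
Proof.
move=> /decodeK; rewrite {2}/block /param_block => /esym/eq_in_map entriesE r c.
exact: (entriesE (r, c) (mem_pairs3 _)).
Qed.

Lemma sum_ord3 (F : 'I_3 -> nat) : \sum_(c < 3) F c = F i0 + F i1 + F i2.
Proof. by rewrite !big_ord_recl big_ord0 addn0 addnA; congr (F _ + F _ + F _); apply: val_inj. Qed.

Lemma card1_inj (T : finType) (f : T -> 'I_9) :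
  (forall v, #|[set x | f x == v]| == 1) -> injective f.
Proof.
move=> f1 x y eq_f; have /cards1P [z fE] := f1 (f x).
have : x \in [set z] by rewrite -fE inE.
have : y \in [set z] by rewrite -fE inE eq_f.
by rewrite !inE => /eqP -> /eqP.
Qed.

Lemma semimagic_sudoku B : semimagic B -> sudoku B.
Proof. by case/andP=> /andP []. Qed.

Lemma sudoku_row_inj B X : sudoku B -> injective (fun Y => B (X, Y)).
Proof.
by case/andP=> /andP [/forallP rowsB _] _; apply: card1_inj => v; apply/(forallP (rowsB X)).
Qed.

Lemma sudoku_col_inj B Y : sudoku B -> injective (fun X => B (X, Y)).
Proof.
by case/andP=> /andP [_ /forallP colsB] _; apply: card1_inj => v; apply/(forallP (colsB Y)).
Qed.

Lemma sudoku_block_inj B b p :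
  sudoku B -> injective (fun rc : 'I_3 * 'I_3 => B ((b, rc.1), (p, rc.2))).
Proof.
case/andP=> _ /forallP /(_ b) /forallP /(_ p) /forallP blockB.
by apply: card1_inj => v; apply: blockB.
Qed.

Lemma magic_block_of_semimagic B b p : semimagic B -> block (raw B) b p \in magic_blocks.
Proof.
move=> /[dup] /semimagic_sudoku sudB /andP [/andP [_ rowsB] colsB].
apply: (@magic_block_complete (fun r c => raw B ((b, r), (p, c)))) => [r c|rc rc'|r|c].
- by rewrite rawE ltn_ord.
- by rewrite !rawE => /val_inj /(sudoku_block_inj sudB).
- move/forallP: rowsB => /(_ b) /forallP /(_ p) /forallP /(_ r) /eqP.
  by rewrite sum_ord3 !rawE.
- move/forallP: colsB => /(_ b) /forallP /(_ p) /forallP /(_ c) /eqP.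
  by rewrite sum_ord3 !rawE.
Qed.

Lemma semimagic_of_blocks B :
  sudoku B -> (forall b p, block (raw B) b p \in magic_blocks) -> semimagic B.
Proof.
move=> sudB magicB; rewrite /semimagic sudB /=.
have lines b p r : (\sum_(c < 3) val (B ((b, r), (p, c))) == 12) &&
                   (\sum_(c < 3) val (B ((b, c), (p, r))) == 12).
  have par_mem := decode_mem (magicB b p).
  rewrite !sum_ord3 -!rawE !(block_entries (magicB b p)).
  exact: (all_ords3 (allP param_lines_check_ok _ par_mem)).
by apply/andP; split; apply/forallP => b; apply/forallP => p; apply/forallP => r;
  case/andP: (lines b p r).
Qed.

Lemma preimset_relabel (T : finType) (s : {perm 'I_9}) (f : T -> 'I_9) v :
  [set x | s (f x) == v] = [set x | f x == (s^-1)%g v].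
Proof. by apply/setP => x; rewrite !inE (canF_eq (permK s)). Qed.

Lemma sudoku_relabel s B : sudoku B -> sudoku (relabel s B).
Proof.
have relabel_set (T : finType) (f : T -> cell) v :
    [set x | relabel s B (f x) == v] = [set x | B (f x) == (s^-1)%g v].
  by rewrite -preimset_relabel; apply/setP => x; rewrite !inE relabelE.
case/andP=> /andP [/forallP rowsB /forallP colsB] /forallP blocksB.
apply/andP; split; first (apply/andP; split).
- by apply/forallP => R; apply/forallP => v; rewrite relabel_set; apply: (forallP (rowsB R)).
- by apply/forallP => C; apply/forallP => v; rewrite relabel_set; apply: (forallP (colsB C)).
apply/forallP => b; apply/forallP => p; apply/forallP => v.
by rewrite relabel_set; apply: (forallP (forallP (blocksB b) p)).
Qed.

(* Doubling the high ternary digit of a symbol exchanges 3, 4, 5 with 6, 7, 8;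
   it transposes every magic block. *)
Definition swap_symbol (y : nat) : nat := 3 * ((2 * (y %/ 3)) %% 3) + y %% 3.

Definition swap_ord (y : 'I_9) : 'I_9 := inord (swap_symbol y).

Lemma swap_ordE y : val (swap_ord y) = swap_symbol y.
Proof.
apply: inordK; rewrite /swap_symbol.
have := ltn_pmod (2 * (y %/ 3)) (isT : 0 < 3); have := ltn_pmod y (isT : 0 < 3).
by case: (y %% 3) => [|[|[|]]] //; case: (2 * (y %/ 3) %% 3) => [|[|[|]]].
Qed.

Lemma swap_ordK : involutive swap_ord.
Proof.
move=> y; apply: val_inj; rewrite !swap_ordE.
by case: y => -[|[|[|[|[|[|[|[|[|]]]]]]]]].
Qed.

Definition swap_perm : {perm 'I_9} := perm (inv_inj swap_ordK).

Lemma swap_magic_check : all (fun q => map swap_symbol q \in magic_blocks) magic_blocks.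
Proof. by vm_compute. Qed.

Lemma swap_perm_S_sm : swap_perm \in S_sm.
Proof.
apply/S_smP => B smB; apply: semimagic_of_blocks.
  exact/sudoku_relabel/semimagic_sudoku.
move=> b p; have -> : block (raw (relabel swap_perm B)) b p = map swap_symbol (block (raw B) b p).
  by rewrite /block -map_comp; apply: eq_map => rc; rewrite /= !rawE relabelE permE swap_ordE.
exact: (allP swap_magic_check _ (magic_block_of_semimagic b p smB)).
Qed.

Inductive move :=
  | Band of nat | RowIn of 'I_3 & nat | Pillar of nat | ColIn of 'I_3 & nat
  | Transpose | SwapDigits.

Definition move_board (m : move) (B : board) : board :=
  match m with
  | Band k => rearrange (band_perm (code_perm k)) B
  | RowIn b k => rearrange (rowin_perm b (code_perm k)) B
  | Pillar k => rearrange (pillar_perm (code_perm k)) B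
  | ColIn p k => rearrange (colin_perm p (code_perm k)) B
  | Transpose => rearrange transpose_perm B
  | SwapDigits => relabel swap_perm B
  end.

Definition run_board (ms : seq move) (B : board) : board := foldl (fun B m => move_board m B) B ms.

Lemma Gsm_orbit_run_board ms B : Gsm_orbit (run_board ms B) = Gsm_orbit B.
Proof.
have inH9 g : g \in H9_gens -> g \in H9 by apply: mem_gen.
elim: ms B => [|m ms IHms] B //=; rewrite IHms.
case: m => [k|b k|k|p k||] /=; last exact: Gsm_orbit_relabel swap_perm_S_sm.
all: apply/Gsm_orbit_rearrange/inH9; rewrite !inE.
- by rewrite (imset_f (fun sg => band_perm sg)).
- by rewrite (@imset_f _ _ (fun bt => rowin_perm bt.1 bt.2) _ (b, code_perm k)) ?orbT.
- by rewrite (imset_f (fun sg => pillar_perm sg)) ?orbT.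
- by rewrite (@imset_f _ _ (fun bt => colin_perm bt.1 bt.2) _ (p, code_perm k)) ?orbT.
- by rewrite eqxx orbT.
Qed.

(* The cell whose entry m carries to x, as in rearrange g B x = B (g^-1 x). *)
Definition move_source (m : move) (x : cell) : cell :=
  let: ((b, r), (p, c)) := x in
  match m with
  | Band k => ((ord_perm3 (perm3_inv k) b, r), (p, c))
  | RowIn b0 k => ((b, if b == b0 then ord_perm3 (perm3_inv k) r else r), (p, c))
  | Pillar k => ((b, r), (ord_perm3 (perm3_inv k) p, c))
  | ColIn p0 k => ((b, r), (p, if p == p0 then ord_perm3 (perm3_inv k) c else c))
  | Transpose => ((p, c), (b, r))
  | SwapDigits => x
  end.

Definition move_raw (m : move) (R : raw_board) : raw_board :=
  if m is SwapDigits then swap_symbol \o R else R \o move_source m.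

Definition run (ms : seq move) (R : raw_board) : raw_board := foldl (fun R m => move_raw m R) R ms.

Lemma raw_move_board m B : raw (move_board m B) =1 move_raw m (raw B).
Proof.
move=> [[b r] [p c]]; case: m => [k|b0 k|k|p0 k||] /=;
  rewrite /= !rawE ?relabelE ?permE ?swap_ordE // rearrangeE.
- by rewrite band_permV code_permV.
- by rewrite rowin_permV /=; case: (b == b0); rewrite ?code_permV.
- by rewrite pillar_permV code_permV.
- by rewrite colin_permV /=; case: (p == p0); rewrite ?code_permV.
- by rewrite transpose_permV.
Qed.

Lemma raw_run_board ms B R : raw B =1 R -> raw (run_board ms B) =1 run ms R.
Proof.
elim: ms B R => [|m ms IHms] B R BR //=; apply: IHms => x.
by rewrite raw_move_board; case: m => * /=; rewrite BR.
Qed.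

(** * Normal forms *)

Definition block_orientation (R : raw_board) (b p : 'I_3) : bool := (decode (block R b p)).1.1.
Definition row_code (R : raw_board) (b p : 'I_3) : nat := (decode (block R b p)).1.2.
Definition col_code (R : raw_board) (b p : 'I_3) : nat := (decode (block R b p)).2.

Definition triple := (bool * bool * bool)%type.
Definition at3 (t : triple) (i : 'I_3) : bool := nth false [:: t.1.1; t.1.2; t.2] i.

Lemma at3E (f : 'I_3 -> bool) i : at3 (f i0, f i1, f i2) i = f i.
Proof. by elim/ord3_ind: i. Qed.

(* A key (e, s, t) records the orientation e shared by all blocks and, for
   each band b, whether the rows of its block in pillar p are permuted by
   r |-> r + p or by r |-> r + 2 p; t does the same for the columns of pillars. *)
Definition key := (bool * triple * triple)%type.

Definition normal_form (k : key) : raw_board :=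
  fun x => let: ((b, r), (p, c)) := x in let: (e, s, t) := k in
    block_entry e (shift (at3 s b) p r) (shift (at3 t p) b c).

Definition row_twist (R : raw_board) (b : 'I_3) : bool := latin_twist (row_code R b).
Definition col_twist (R : raw_board) (p : 'I_3) : bool := latin_twist (col_code R ^~ p).

Definition key_of (R : raw_board) : key :=
  (block_orientation R i0 i0, (row_twist R i0, row_twist R i1, row_twist R i2),
   (col_twist R i0, col_twist R i1, col_twist R i2)).

Lemma normal_form_key_of R b r p c : normal_form (key_of R) ((b, r), (p, c)) =
  block_entry (block_orientation R i0 i0) (shift (row_twist R b) p r) (shift (col_twist R p) b c).
Proof. by rewrite /= !at3E. Qed.

Definition normalizing_moves (R : raw_board) : seq move :=
  [seq RowIn b (row_code R b i0) | b <- ords3] ++ [seq ColIn p (col_code R i0 p) | p <- ords3].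

Lemma run_normalizing_moves R b r p c :
  run (normalizing_moves R) R ((b, r), (p, c)) =
  R ((b, ord_perm3 (perm3_inv (row_code R b i0)) r),
     (p, ord_perm3 (perm3_inv (col_code R i0 p)) c)).
Proof. by elim/ord3_ind: b; elim/ord3_ind: p. Qed.

Section SemimagicStructure.
Variable B : board.
Hypothesis smB : semimagic B.

Local Notation R := (raw B).

Lemma semimagic_param_entry b p r c :
  R ((b, r), (p, c)) = param_entry (decode (block R b p)) r c.
Proof. exact: (block_entries (magic_block_of_semimagic b p smB)). Qed.

Lemma semimagic_entry b p r c : R ((b, r), (p, c)) =
  block_entry (block_orientation R b p) (perm3 (row_code R b p) r) (perm3 (col_code R b p) c).
Proof.
rewrite semimagic_param_entry /block_orientation /row_code /col_code.
by case: (decode _) => [[]].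
Qed.

Lemma codes_lt b p : (row_code R b p < 6) && (col_code R b p < 6).
Proof. exact/param_codes_lt/decode_mem/magic_block_of_semimagic. Qed.

Lemma sudoku_row_distinct b r p p' c c' :
  p != p' -> R ((b, r), (p, c)) != R ((b, r), (p', c')).
Proof.
move=> neq_pp'; apply: contraNneq neq_pp'; rewrite !rawE => /val_inj.
by move/(sudoku_row_inj (X := (b, r)) (semimagic_sudoku smB)) => -[-> _].
Qed.

Lemma sudoku_col_distinct b b' r r' p c :
  b != b' -> R ((b, r), (p, c)) != R ((b', r'), (p, c)).
Proof.
move=> neq_bb'; apply: contraNneq neq_bb'; rewrite !rawE => /val_inj.
by move/(sudoku_col_inj (Y := (p, c)) (semimagic_sudoku smB)) => -[-> _].
Qed.

Lemma band_neighbours b p p' : p != p' ->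
  block_orientation R b p = block_orientation R b p' /\
  forall r : 'I_3, perm3 (row_code R b p) r != perm3 (row_code R b p') r.
Proof.
move=> neq_pp'; rewrite /block_orientation /row_code.
have disjoint_rows (r c c' : 'I_3) :
    param_entry (decode (block R b p)) r c != param_entry (decode (block R b p')) r c'.
  by have := @sudoku_row_distinct b r p p' c c' neq_pp'; rewrite !semimagic_param_entry.
exact: (neighboursP band_neighbours_check_ok (decode_mem (magic_block_of_semimagic b p smB))
  (decode_mem (magic_block_of_semimagic b p' smB)) disjoint_rows).
Qed.

Lemma pillar_neighbours b b' p : b != b' ->
  block_orientation R b p = block_orientation R b' p /\
  forall c : 'I_3, perm3 (col_code R b p) c != perm3 (col_code R b' p) c.
Proof.
move=> neq_bb'; rewrite /block_orientation /col_code.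
have disjoint_cols (c r r' : 'I_3) :
    param_entry (decode (block R b p)) r c != param_entry (decode (block R b' p)) r' c.
  by have := @sudoku_col_distinct b b' r r' p c neq_bb'; rewrite !semimagic_param_entry.
exact: (neighboursP pillar_neighbours_check_ok (decode_mem (magic_block_of_semimagic b p smB))
  (decode_mem (magic_block_of_semimagic b' p smB)) disjoint_cols).
Qed.

Lemma block_orientation_const b p : block_orientation R b p = block_orientation R i0 i0.
Proof.
have col_const : block_orientation R b i0 = block_orientation R i0 i0.
  by have [-> //|neq_b] := eqVneq b i0; apply: proj1 (pillar_neighbours i0 neq_b).
have [-> | neq_p] := eqVneq p i0; first apply: col_const.
exact (etrans (proj1 (band_neighbours b neq_p)) col_const).
Qed.

Lemma row_shift b p (r : 'I_3) :
  perm3 (row_code R b p) (perm3 (perm3_inv (row_code R b i0)) r) = shift (row_twist R b) p r.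
Proof.
apply: (latin_shift (f := row_code R b)) => [p'|p1 p2 /(band_neighbours b) []//].
by case/andP: (codes_lt b p').
Qed.

Lemma col_shift b p (c : 'I_3) :
  perm3 (col_code R b p) (perm3 (perm3_inv (col_code R i0 p)) c) = shift (col_twist R p) b c.
Proof.
apply: (latin_shift (f := col_code R ^~ p)) => [b'|b1 b2 /(pillar_neighbours p) []//].
by case/andP: (codes_lt b' p).
Qed.

Theorem semimagic_normal_form :
  run (normalizing_moves R) R =1 normal_form (key_of R).
Proof.
move=> [[b r] [p c]]; rewrite run_normalizing_moves normal_form_key_of semimagic_entry.
rewrite block_orientation_const !ord_perm3E.
exact: f_equal2 (row_shift b p r) (col_shift b p c).
Qed.

End SemimagicStructure.

(** * Certificates *)

Definition rep_key (i : 'I_3) : key := (false, (false, false, 1 < i), (false, false, 0 < i)).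

Definition certificate := ('I_3 * seq move)%type.

Definition cert_board (c : certificate) : raw_board := run c.2 (normal_form (rep_key c.1)).

Definition search_moves : seq move :=
  [seq Band k | k <- iota 1 5] ++ [seq Pillar k | k <- iota 1 5] ++ [:: Transpose; SwapDigits].

Definition extend (kc : key * certificate) (m : move) : key * certificate :=
  let R := move_raw m (normal_form kc.1) in
  (key_of R, (kc.2.1, rcons kc.2.2 m ++ normalizing_moves R)).

(* Breadth-first search from the representatives, renormalising after each
   move; its output is only trusted through certificates_check. *)
Fixpoint explore (n : nat) (found frontier : seq (key * certificate)) :=
  if n is n'.+1 then
    let found' := foldl (fun acc kc => if kc.1 \in map fst acc then acc else rcons acc kc)
                    found [seq extend kc m | kc <- frontier, m <- search_moves] in
    explore n' found' (drop (size found) found')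
  else found.

Definition certificates : seq (key * certificate) :=
  let start := [seq (rep_key i, (i, [::])) | i <- ords3] in explore 4 start start.

Definition triples : seq triple :=
  [seq (ab, c) | ab <- [seq (a, b) | a <- [:: false; true], b <- [:: false; true]],
                 c <- [:: false; true]].
Definition all_keys : seq key :=
  [seq (es, t) | es <- [seq (e, s) | e <- [:: false; true], s <- triples], t <- triples].

Lemma mem_all_keys k : k \in all_keys.
Proof.
have mem_triples (t : triple) : t \in triples by case: t => [[[] []] []].
by case: k => [[e s] t]; apply: allpairs_f => //; apply: allpairs_f => //; case: e.
Qed.

Definition certified (kc : key * certificate) : bool :=
  all (fun x => cert_board kc.2 x == normal_form kc.1 x) cells.

(* [if] rather than [&&], which vm_compute would evaluate eagerly. *)
Definition certificates_check (cs : seq (key * certificate)) : bool :=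
  all (fun k => has (fun kc => if kc.1 == k then certified kc else false) cs) all_keys.

Lemma certificates_check_ok : certificates_check certificates.
Proof. by vm_compute. Qed.

Lemma normal_form_certified k : exists c, cert_board c =1 normal_form k.
Proof.
(* Abstracting certificates keeps unification from running the search. *)
move: certificates_check_ok; move: certificates => cs /allP /(_ k (mem_all_keys k)).
move=> /(nth_find (k, (i0, [::]))) /=; set kc := nth _ _ _; case: eqP => // <- certifiedP.
by exists kc.2 => x; apply/eqP/(allP certifiedP)/mem_cells.
Qed.

Lemma normal_form_lt k x : normal_form k x < 9.
Proof. by case: x => [[b r] [p c]]; case: k => [[e s] t]; apply: block_entry_lt. Qed.

Definition rep (i : 'I_3) : board := [ffun x => inord (normal_form (rep_key i) x)].

Lemma raw_rep i : raw (rep i) =1 normal_form (rep_key i).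
Proof. by move=> x; rewrite rawE ffunE /= inordK // normal_form_lt. Qed.

Lemma Gsm_orbit_rep B : semimagic B -> exists i, Gsm_orbit B = Gsm_orbit (rep i).
Proof.
move=> smB; have [[i ms] certE] := normal_form_certified (key_of (raw B)).
exists i; rewrite -(Gsm_orbit_run_board (normalizing_moves (raw B)) B).
rewrite -(Gsm_orbit_run_board ms (rep i)); congr Gsm_orbit.
apply/ffunP => x; apply: val_inj; rewrite -!rawE.
rewrite (raw_run_board _ (frefl (raw B))) (raw_run_board _ (raw_rep i)).
by rewrite semimagic_normal_form // -certE.
Qed.

Lemma card_pairs3 (P : pred ('I_3 * 'I_3)) : #|[set x | P x]| = count P pairs3.
Proof.
rewrite -size_filter -(card_uniqP (filter_uniq P (isT : uniq pairs3))).
by apply: eq_card => x; rewrite inE mem_filter mem_pairs3 andbT.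
Qed.

Definition raw_sudoku (R : raw_board) : bool :=
  let once (f : 'I_3 * 'I_3 -> nat) :=
    all (fun v => count (fun x => f x == v) pairs3 == 1) symbols in
  [&& all (fun X => once (fun Y => R (X, Y))) pairs3,
      all (fun Y => once (fun X => R (X, Y))) pairs3 &
      all (fun b => all (fun p => once (fun rc => R ((b, rc.1), (p, rc.2)))) ords3) ords3].

Lemma sudoku_of_raw B R : raw B =1 R -> raw_sudoku R -> sudoku B.
Proof.
move=> BR /and3P [/allP rowsR /allP colsR /allP blocksR].
have once (f : 'I_3 * 'I_3 -> cell) (v : 'I_9) :
    all (fun w => count (fun x => R (f x) == w) pairs3 == 1) symbols ->
    #|[set x | B (f x) == v]| == 1.
  move=> /allP /(_ v); rewrite mem_iota ltn_ord card_pairs3 => /(_ isT).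
  by under eq_count => x do rewrite -BR rawE (inj_eq val_inj).
apply/andP; split; [apply/andP; split|]; do ?[apply/forallP => ?]; apply: once.
- exact: rowsR (mem_pairs3 _).
- exact: colsR (mem_pairs3 _).
- exact: (allP (blocksR _ (mem_ords3 _)) _ (mem_ords3 _)).
Qed.

Lemma semimagic_of_raw B R : raw B =1 R -> raw_sudoku R ->
  all (fun b => all (fun p => block R b p \in magic_blocks) ords3) ords3 -> semimagic B.
Proof.
move=> BR sudR /allP blocksR; apply: semimagic_of_blocks; first exact: sudoku_of_raw sudR.
move=> b p; have -> : block (raw B) b p = block R b p by apply: eq_map => rc; apply: BR.
exact: (allP (blocksR _ (mem_ords3 b)) _ (mem_ords3 p)).
Qed.

Definition rep_semimagic_check : bool :=
  all (fun i => let R := normal_form (rep_key i) in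
         raw_sudoku R && all (fun b => all (fun p => block R b p \in magic_blocks) ords3) ords3)
    ords3.

Lemma rep_semimagic_check_ok : rep_semimagic_check. Proof. by vm_compute. Qed.

Lemma semimagic_rep i : semimagic (rep i).
Proof.
have /andP [sudR blocksR] := allP rep_semimagic_check_ok i (mem_ords3 i).
exact: semimagic_of_raw (raw_rep i) sudR blocksR.
Qed.

Definition raw_row (R : raw_board) (b p r : 'I_3) : seq nat :=
  [seq R ((b, r), (p, c)) | c <- ords3].

Definition same_elements (s t : seq nat) : bool :=
  all (fun x => x \in t) s && all (fun x => x \in s) t.

Lemma same_elementsP s t : reflect (s =i t) (same_elements s t).
Proof.
apply: (iffP andP) => [[/allP st /allP ts] x|st].
  by apply/idP/idP => [/st|/ts].
by split; apply/allP => x; rewrite st.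
Qed.

Lemma row_symbols_raw B R b p r : raw B =1 R ->
  forall y : 'I_9, (y \in row_symbols B b p r) = (val y \in raw_row R b p r).
Proof.
move=> BR y; apply/imsetP/mapP => -[c _ yE]; exists c; rewrite ?mem_ords3 //.
  by rewrite -BR rawE yE.
by apply: val_inj; rewrite yE -BR rawE.
Qed.

Lemma row_symbols_eq_raw B R b' p r' b r : raw B =1 R ->
  (row_symbols B b' p r' == row_symbols B b p r) =
  same_elements (raw_row R b' p r') (raw_row R b p r).
Proof.
move=> BR; apply/eqP/same_elementsP => [eqS x|eqR]; last first.
  by apply/setP => y; rewrite !(row_symbols_raw _ _ _ BR) eqR.
have rowP b1 p1 r1 : x \in raw_row R b1 p1 r1 -> exists y : 'I_9, x = val y.
  by case/mapP => c _ ->; exists (B ((b1, r1), (p1, c))); rewrite -BR rawE.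
apply/idP/idP => [/[dup] /rowP [y ->]|/[dup] /rowP [y ->]];
  by rewrite -!(row_symbols_raw _ _ _ BR) eqS.
Qed.

Definition raw_rows_matched (R : raw_board) : bool :=
  all (fun b => all (fun b' => all (fun r' => has (fun r => all (fun p =>
    same_elements (raw_row R b' p r') (raw_row R b p r)) ords3) ords3) ords3) ords3) ords3.

Lemma rows_matched_raw B R : raw B =1 R -> rows_matched B = raw_rows_matched R.
Proof.
have forallE (P : pred 'I_3) : [forall x, P x] = all P ords3.
  by apply/forallP/allP => [PP x _|PP x]; [apply: PP | apply/PP/mem_ords3].
have existsE (P : pred 'I_3) : [exists x, P x] = has P ords3.
  by apply/existsP/hasP => [[x Px]|[x _ Px]]; exists x; rewrite ?mem_ords3.
move=> BR; rewrite /rows_matched /bands_matched forallE; apply: eq_all => b.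
rewrite forallE; apply: eq_all => b'; rewrite forallE; apply: eq_all => r'.
rewrite existsE; apply: eq_has => r; rewrite forallE; apply: eq_all => p.
exact: row_symbols_eq_raw.
Qed.

Definition raw_matching_number (R : raw_board) : nat :=
  raw_rows_matched R + raw_rows_matched (fun x => R (x.2, x.1)).

Lemma matching_number_raw B R : raw B =1 R -> matching_number B = raw_matching_number R.
Proof.
move=> BR; rewrite /matching_number (rows_matched_raw BR).
rewrite (@rows_matched_raw _ (fun x => R (x.2, x.1))) // => x.
by rewrite rawE rearrangeE transpose_permV -rawE BR.
Qed.

Lemma rep_matching_check :
  all (fun i => raw_matching_number (normal_form (rep_key i)) == 2 - i) ords3.
Proof. by vm_compute. Qed.

Lemma matching_number_rep i : matching_number (rep i) = 2 - i.
Proof.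
by rewrite (matching_number_raw (raw_rep i)); apply/eqP/(allP rep_matching_check)/mem_ords3.
Qed.

Theorem theorem3p7 :
  #|[set Gsm_orbit B | B in semimagic_boards]| = 3.
Proof.
have -> : [set Gsm_orbit B | B in semimagic_boards] = [set Gsm_orbit (rep i) | i : 'I_3].
  apply/setP => X; apply/imsetP/imsetP => -[].
    by move=> B; rewrite inE => /Gsm_orbit_rep [i ->] ->; exists i.
  by move=> i _ ->; exists (rep i); rewrite ?inE ?semimagic_rep.
rewrite card_imset; first by rewrite card_ord.
move=> i j eq_orbits; apply: val_inj => /=.
have := Gsm_orbit_refl (rep i); rewrite eq_orbits => /matching_number_orbit.
have le2 (k : 'I_3) : k <= 2 := ltn_ord k.
by rewrite !matching_number_rep => /(congr1 (subn 2)); rewrite !subKn ?le2.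
Qed.
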